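(* Let $\vec{\mathcal U}\in\Upsilon$ and $\theta\in L$. Then $\theta\in Bel(\preceq_{\vec{\mathcal U}})$ if and only if $\top\mid\!\sim_{\vec{\mathcal U}}\theta$.
   Context: $L$ is a propositional language built from a finite set of propositional variables with the connectives $\neg,\wedge,\vee,\rightarrow,\top,\bot$; $W$ is the finite set of propositional worlds. For $\theta\in L$, $S_\theta=\{w\in W\mid w\models\theta\}$. Sequences: consider finite sequences $\vec{\mathcal U}=(\mathcal U_0,\ldots,\mathcal U_k)$ ($k\ge 0$) of mutually disjoint subsets of $W$ (components may be empty, possibly repeatedly). $\mathrm{rank}^{\vec{\mathcal U}}(\theta)$ is the least $i$ with $\mathcal U_i\cap S_\theta\neq\emptyset$, and $\infty$ if none (with $i<\infty$ for every integer $i$). $\theta\mid\!\sim_{\vec{\mathcal U}}\phi$ iff either $\mathrm{rank}^{\vec{\mathcal U}}(\theta)<\mathrm{rank}^{\vec{\mathcal U}}(\theta\wedge\neg\phi)$ or $\mathrm{rank}^{\vec{\mathcal U}}(\theta)=\infty$. $\vec{\mathcal U}$ is full iff $\bigcup_i\mathcal U_i=W$, empty iff $\bigcup_i\mathcal U_i=\emptyset$; $\Upsilon$ is the set of such sequences which are full or empty. For $\vec{\mathcal U}\in\Upsilon$, $\theta\preceq_{\vec{\mathcal U}}\phi$ iff (not $\neg\theta\vee\neg\phi\mid\!\sim_{\vec{\mathcal U}}\theta$) or $\neg\phi\mid\!\sim_{\vec{\mathcal U}}\bot$; its strict part $\prec_{\vec{\mathcal U}}$ is given by $\theta\prec_{\vec{\mathcal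 U}}\phi$ iff $\theta\preceq_{\vec{\mathcal U}}\phi$ and not $\phi\preceq_{\vec{\mathcal U}}\theta$. For a relation $\preceq$ on $L$ with strict part $\prec$, its belief set is $Bel(\preceq)=\{\theta\mid\bot\prec\theta\}$ if $\bot\prec\theta$ for some $\theta\in L$, and $Bel(\preceq)=L$ otherwise. *)

From mathcomp Require Import all_boot.
Set Implicit Arguments. Unset Strict Implicit. Unset Printing Implicit Defensive.

Inductive form (n : nat) : Type :=
| Var of 'I_n
| Neg of form n
| And of form n & form n
| Or of form n & form n
| Imp of form n & form n
| Top
| Bot.
Arguments Top {n}. Arguments Bot {n}.

Definition world (n : nat) := {ffun 'I_n -> bool}.

Fixpoint sat n (w : world n) (t : form n) : bool :=
  match t with
  | Var v => w v
  | Neg a => ~~ sat w a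
  | And a b => sat w a && sat w b
  | Or a b => sat w a || sat w b
  | Imp a b => sat w a ==> sat w b
  | Top => true
  | Bot => false
  end.

Definition S n (t : form n) : {set world n} := [set w | sat w t].

Definition is_seq n (U : seq {set world n}) : Prop :=
  0 < size U /\
  (forall i j, i < size U -> j < size U -> i != j ->
     [disjoint nth set0 U i & nth set0 U j]).

(* rank: Some i = least i with U_i meeting S_theta; None = infinity. *)
Definition rank n (U : seq {set world n}) (t : form n) : option nat :=
  let i := find (fun A : {set world n} => A :&: S t != set0) U in
  if i < size U then Some i else None.

Definition rank_lt (a b : option nat) : bool :=
  match a, b with
  | Some i, Some j => i < j
  | Some _, None => true
  | None, _ => false
  end.

Definition nmsim n (U : seq {set world n}) (t p : form n) : bool :=
  rank_lt (rank U t) (rank U (And t (Neg p))) || (rank U t == None).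

Definition full n (U : seq {set world n}) : Prop :=
  \bigcup_(A <- U) A = [set: world n].
Definition emptyseq n (U : seq {set world n}) : Prop :=
  \bigcup_(A <- U) A = set0.

Definition in_Upsilon n (U : seq {set world n}) : Prop :=
  is_seq U /\ (full U \/ emptyseq U).

Definition preceqU n (U : seq {set world n}) (t p : form n) : bool :=
  ~~ nmsim U (Or (Neg t) (Neg p)) t || nmsim U (Neg p) Bot.

Definition strict_part T (le : T -> T -> bool) (x y : T) : bool :=
  le x y && ~~ le y x.

Definition in_Bel n (le : form n -> form n -> bool) (t : form n) : Prop :=
  ((exists p, strict_part le Bot p) /\ strict_part le Bot t)
  \/ ~ (exists p, strict_part le Bot p).

(* Since [Or (Neg Bot) (Neg p)] is equivalent to [Top] and [t |~ Bot] holds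
   exactly when [t] has infinite rank, [Bot] is strictly below [p] iff [Top]
   has finite rank and [Top |~ p].  If [Top] has infinite rank, nothing lies
   strictly above [Bot], so the belief set is all of [L], and [Top |~ p] holds
   for every [p]; otherwise [Top] itself lies strictly above [Bot], so the
   belief set is [{p | Top |~ p}].  The argument works for every sequence. *)
From mathcomp Require Import all_boot.

Set Implicit Arguments.
Unset Strict Implicit.
Unset Printing Implicit Defensive.

Section Ranks.

Variables (n : nat) (U : seq {set world n}).

Lemma eq_rank (t t' : form n) : S t = S t' -> rank U t = rank U t'.
Proof. by move=> eqS; rewrite /rank eqS. Qed.

Lemma eq_nmsim (t t' p p' : form n) :
  S t = S t' -> S p = S p' -> nmsim U t p = nmsim U t' p'.
Proof.
move=> eqt eqp; have eqtp : S (And t (Neg p)) = S (And t' (Neg p')).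
  apply/setP=> w; move/setP/(_ w): eqt; move/setP/(_ w): eqp.
  by rewrite !inE /= => -> ->.
by rewrite /nmsim (eq_rank eqt) (eq_rank eqtp).
Qed.

Lemma rank_ltxx (a : option nat) : rank_lt a a = false.
Proof. by case: a => //= i; rewrite ltnn. Qed.

Lemma rank_Bot : rank U Bot = None.
Proof.
rewrite /rank -has_find; case: hasP => // -[A _].
by rewrite (_ : S Bot = set0) ?setI0 ?eqxx //; apply/setP=> w; rewrite !inE.
Qed.

Lemma nmsim_None (t p : form n) : rank U t = None -> nmsim U t p.
Proof. by rewrite /nmsim => ->; rewrite orbT. Qed.

Lemma nmsimT (t : form n) : nmsim U t Top.
Proof.
rewrite /nmsim (@eq_rank (And t (Neg Top)) Bot) ?rank_Bot; first by case: (rank U t).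
by apply/setP=> w; rewrite !inE /= andbF.
Qed.

Lemma nmsim_Bot (t : form n) : nmsim U t Bot = (rank U t == None).
Proof.
rewrite /nmsim (@eq_rank _ t) ?rank_ltxx //.
by apply/setP=> w; rewrite !inE /= andbT.
Qed.

Lemma preceqU_Bot_l (p : form n) :
  preceqU U Bot p = (rank U Top != None) || (rank U (Neg p) == None).
Proof.
by rewrite /preceqU !nmsim_Bot (@eq_rank (Or (Neg Bot) (Neg p)) Top).
Qed.

Lemma preceqU_Bot_r (p : form n) :
  preceqU U p Bot = ~~ nmsim U Top p || (rank U Top == None).
Proof.
rewrite /preceqU nmsim_Bot (@eq_nmsim (Or (Neg p) (Neg Bot)) Top p p) //.
by apply/setP=> w; rewrite !inE /= orbT.
Qed.

Lemma strict_preceqU_Bot (p : form n) :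
  strict_part (preceqU U) Bot p = (rank U Top != None) && nmsim U Top p.
Proof.
rewrite /strict_part preceqU_Bot_l preceqU_Bot_r.
by case: eqP => _ /=; rewrite ?orbT ?andbF ?orbF ?negbK.
Qed.

End Ranks.

Theorem proposition4 (n : nat) (U : seq {set world n}) (t : form n) :
  in_Upsilon U -> (in_Bel (preceqU U) t <-> nmsim U Top t).
Proof.
move=> _; rewrite /in_Bel.
case: (rank U Top =P None) => [infTop | finTop].
  split=> [_ | _]; first exact: nmsim_None.
  by right=> -[p]; rewrite strict_preceqU_Bot infTop.
have topBel : exists p, strict_part (preceqU U) Bot p.
  by exists Top; rewrite strict_preceqU_Bot nmsimT andbT; apply/eqP.
rewrite strict_preceqU_Bot; split=> [[[_ /andP[]] // | noBel] | tBel].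
  by case: (noBel topBel).
by left; split=> //; apply/andP; split=> //; apply/eqP.
Qed.
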